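(* Let $(X,d)$ be a compact metric space whose open balls are connected, $\lambda\in(0,1)$, $U\subset\mathbb{R}^M$ of positive Lebesgue measure, $\{f_\mu\}_{\mu\in U}$ a family of piecewise $\lambda$-contractions on $X$, and $\mu^*\in U$. If $\{\mathscr{C}^{(n)}_\mu\}_{\mu\in U}$ is stable at $\mu^*$ for every $n\ge1$ and $H_{\mathrm{mult}}(f_{\mu^*})=0$, then $\{f_\mu\}_{\mu\in U}$ satisfies Hypothesis (E) at $\mu^*$.
   Context: A piecewise $\lambda$-contraction $f\colon X\to X$: there exist $N\in\mathbb{N}$, open connected pairwise disjoint $A_1,\dots,A_N\subset X$ with dense union $X'$, and bi-Lipschitz $\varphi_i\colon X\to X$ with Lipschitz constant $\le\lambda$ and $f|_{A_i}=\varphi_i|_{A_i}$; $S(f)=X\setminus X'$. A family $\{f_\mu\}_{\mu\in U}$: each $f_\mu$ is such a map with the same label set $\mathcal{A}=\{1,\dots,N\}$, partition $\{A_{i,\mu}\}$ and maps $\{\varphi_{i,\mu}\}$. A point $x$ is regular of order $n$ for $f_\mu$ if $f_\mu^j(x)\notin S(f_\mu)$ for $0\le j<n$; its itinerary of order $n$ is $(i_0,\dots,i_{n-1})$ with $f_\mu^j(x)\in A_{i_j,\mu}$; $\mathcal{I}_n(f_\mu)$ is the set of such itineraries. $\mathscr{C}^{(1)}_\mu=\{A_{i,\mu}\}_{i\in\mathcal{A}}$, and for $n\ge2$, $\mathscr{C}^{(n)}_\mu$ is the collection of the nonempty sets $A^\alpha_\mu=A_{i_0,\mu}\cap\varphi_{i_0,\mu}^{-1}(A_{i_1,\mu})\cap\cdots\cap(\varphi_{i_{n-2},\mu}\circ\cdots\circ\varphi_{i_0,\mu})^{-1}(A_{i_{n-1},\mu})$,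 $\alpha=(i_0,\dots,i_{n-1})\in\mathcal{A}^n$. For a finite collection $\mathscr{C}$ of subsets of $X$, $\mathrm{mult}(\mathscr{C})=\max_{x\in X}\#\{A\in\mathscr{C}:x\in\overline A\}$. $H_{\mathrm{mult}}(f_\mu)=\limsup_{n\to\infty}\frac1n\log\mathrm{mult}(\mathscr{C}^{(n)}_\mu)$. Let $U_\delta(\mu^* )=U\cap B_\delta(\mu^* )$. For fixed $n$, $\{\mathscr{C}^{(n)}_\mu\}_{\mu\in U}$ is stable at $\mu^*$ if there is $\delta>0$ with (i) $\mathcal{I}_n(f_\mu)=\mathcal{I}_n(f_{\mu^*})$ for all $\mu\in U_\delta(\mu^* )$, and (ii) $d_H(A^\alpha_\mu,A^\alpha_{\mu^*})\to0$ as $\mu\to\mu^*$ for every $\alpha\in\mathcal{I}_n(f_{\mu^*})$, where $d_H$ is the Hausdorff distance. Hypothesis (E) at $\mu^*$: $\lim_{\delta\to0^+}\limsup_{n\to\infty}\frac1n\log\#\mathcal{J}_n^\delta(\mu^* )=0$, where $\mathcal{J}_n^\delta(\mu^* )=\bigcup_{\mu\in U_\delta(\mu^* )}\mathcal{I}_n(f_\mu)$. *)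

From HB Require Import structures.
From mathcomp Require Import all_boot all_order all_algebra.
From mathcomp Require Import all_classical all_reals all_analysis.
Set Implicit Arguments. Unset Strict Implicit. Unset Printing Implicit Defensive.
Import Order.TTheory GRing.Theory Num.Theory Num.Def.
Import numFieldNormedType.Exports.
Local Open Scope classical_set_scope.
Local Open Scope ring_scope.

Section Defs.
Variable R : realType.

Definition box (M : nat) (a b : 'rV[R]_M) : set 'rV[R]_M :=
  [set x | forall i : 'I_M, a ord0 i <= x ord0 i <= b ord0 i].
Definition box_vol (M : nat) (a b : 'rV[R]_M) : R :=
  \prod_(i < M) maxr 0 (b ord0 i - a ord0 i).
(* U is Lebesgue-null: for every e > 0, U is covered by countably many
   boxes of total volume <= e (i.e. Lebesgue outer measure of U is 0). *)
Definition lebesgue_null (M : nat) (U : set 'rV[R]_M) : Prop :=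
  forall e : R, 0 < e -> exists a b : nat -> 'rV[R]_M,
    U `<=` \bigcup_k box (a k) (b k) /\
    forall n, \sum_(k < n) box_vol (a k) (b k) <= e.
Definition positive_lebesgue_measure (M : nat) (U : set 'rV[R]_M) : Prop :=
  ~ lebesgue_null U.

Variable X : metricType R.
Local Notation d := (@mdist R X).

Definition bi_lipschitz_le (lam : R) (g : X -> X) : Prop :=
  exists c : R, 0 < c /\
    forall x y, c * d x y <= d (g x) (g y) /\ d (g x) (g y) <= lam * d x y.

Definition partition_union (N : nat) (A : 'I_N -> set X) : set X :=
  \bigcup_(i in [set: 'I_N]) A i.

Definition singular_set (N : nat) (A : 'I_N -> set X) : set X :=
  ~` partition_union A.

Definition piecewise_contraction (lam : R) (N : nat)
    (A : 'I_N -> set X) (phi : 'I_N -> X -> X) (f : X -> X) : Prop :=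
  [/\ forall i, open (A i) /\ connected (A i),
      forall i j, i != j -> A i `&` A j = set0,
      closure (partition_union A) = [set: X],
      forall i, bi_lipschitz_le lam (phi i)
    & forall i x, A i x -> f x = phi i x].

Definition regular_of_order (N : nat) (A : 'I_N -> set X) (f : X -> X)
    (n : nat) (x : X) : Prop :=
  forall j, (j < n)%N -> ~ singular_set A (iter j f x).

Definition is_itinerary (N n : nat) (A : 'I_N -> set X) (f : X -> X)
    (x : X) (al : n.-tuple 'I_N) : Prop :=
  forall j : 'I_n, A (tnth al j) (iter j f x).

Definition itineraries (N : nat) (A : 'I_N -> set X) (f : X -> X) (n : nat)
  : {set n.-tuple 'I_N} :=
  [set al | `[< exists x, regular_of_order A f n x /\ is_itinerary A f x al >]].

Definition phi_comp (N : nat) (phi : 'I_N -> X -> X) (s : seq 'I_N) (x : X) : X :=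
  foldl (fun y i => phi i y) x s.

Definition cell (N n : nat) (A : 'I_N -> set X) (phi : 'I_N -> X -> X)
    (al : n.-tuple 'I_N) : set X :=
  [set x | forall j : 'I_n, A (tnth al j) (phi_comp phi (take j al) x)].

(* mult(C^(n)) = max_x #{ B in C^(n) : x in closure B }, where C^(n) consists
   of the nonempty cells (distinct nonempty cells have distinct labels). *)
Definition mult_cells (N : nat) (A : 'I_N -> set X) (phi : 'I_N -> X -> X)
    (n : nat) : R :=
  sup [set (#|[set al : n.-tuple 'I_N |
                 `[< cell A phi al !=set0 /\ closure (cell A phi al) x >]]|)%:R
      | x in [set: X]].

Definition H_mult (N : nat) (A : 'I_N -> set X) (phi : 'I_N -> X -> X)
  : \bar R :=
  limn_esup (fun n : nat => ((n%:R)^-1 * ln (mult_cells A phi n))%:E).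

Definition point_set_dist (x : X) (B : set X) : R := inf [set d x b | b in B].
Definition hausdorff_dist (A B : set X) : R :=
  maxr (sup [set point_set_dist a B | a in A])
       (sup [set point_set_dist b A | b in B]).

Variables (M N : nat) (U : set 'rV[R]_M)
  (A : 'rV[R]_M -> 'I_N -> set X) (phi : 'rV[R]_M -> 'I_N -> X -> X)
  (f : 'rV[R]_M -> X -> X).

Definition U_delta (mu0 : 'rV[R]_M) (delta : R) : set 'rV[R]_M :=
  U `&` ball mu0 delta.

Definition cells_stable_at (n : nat) (mu0 : 'rV[R]_M) : Prop :=
  exists delta : R, 0 < delta /\
   (forall mu, U_delta mu0 delta mu ->
       itineraries (A mu) (f mu) n = itineraries (A mu0) (f mu0) n) /\
   (forall al, al \in itineraries (A mu0) (f mu0) n ->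
       (fun mu => hausdorff_dist (cell (A mu) (phi mu) al)
                                 (cell (A mu0) (phi mu0) al))
         @ within U (nbhs mu0) --> (0 : R)).

Definition J_set (n : nat) (delta : R) (mu0 : 'rV[R]_M) : {set n.-tuple 'I_N} :=
  [set al | `[< exists2 mu, U_delta mu0 delta mu &
                al \in itineraries (A mu) (f mu) n >]].

Definition hypothesis_E (mu0 : 'rV[R]_M) : Prop :=
  (fun delta : R =>
     limn_esup (fun n : nat => ((n%:R)^-1 * ln (#|J_set n delta mu0|)%:R)%:E))
    @ 0^'+ --> (0 : \bar R).

End Defs.

(* Fix eta > 0 and call a word admissible when its cell for f_mu0 is nonempty.
   Since H_mult(f_mu0) = 0, there is n with mult(C^(n)) <= exp(n eta).
   Contraction bounds by K = max(1, mult(C^(n))) the number of admissible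
   continuations of length n of any word of a suitable length m.  By stability
   of the itineraries of length m + n, for mu near mu0 every window of length
   m + n of an itinerary of f_mu is admissible, so #J_p <= C K^(p/n) and the
   exponential growth rate of #J_p is at most ln K / n <= eta. *)

From HB Require Import structures.
From mathcomp Require Import all_boot all_order all_algebra.
From mathcomp Require Import all_classical all_reals all_analysis.
From mathcomp Require Import zify.
Import Order.TTheory GRing.Theory Num.Theory Num.Def.
Import numFieldNormedType.Exports.
Local Open Scope classical_set_scope.
Local Open Scope ring_scope.
Set Implicit Arguments. Unset Strict Implicit.

Lemma in_set_asboolE (T : Type) (P : T -> Prop) x :
  (x \in [set y | `[< P y >]]) = `[< P x >].
Proof. by apply/idP/idP; rewrite in_setE. Qed.

Lemma leq_card_asbool (T : finType) (P Q : T -> Prop) : (forall x, P x -> Q x) ->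
  (#|[set x | `[< P x >]]| <= #|[set x | `[< Q x >]]|)%N.
Proof.
move=> PQ; apply/subset_leq_card/fintype.subsetP => x.
by rewrite !inE => /asboolP Px; apply/asboolP; exact: PQ.
Qed.

Lemma drop_cat_leq (T : Type) n (s t : seq T) :
  (n <= size s)%N -> drop n (s ++ t) = drop n s ++ t.
Proof.
by move=> ns; rewrite -{1}[s](cat_take_drop n) -catA drop_size_cat // size_takel.
Qed.

Section Cells.
Variables (R : realType) (X : metricType R) (N : nat).
Variables (A : 'I_N -> set X) (phi : 'I_N -> X -> X).

Fixpoint seq_cell (s : seq 'I_N) (x : X) : Prop :=
  if s is i :: s' then A i x /\ seq_cell s' (phi i x) else True.

Lemma seq_cell_nthP s x : seq_cell s x <->
  (forall j i, (j < size s)%N -> A (nth i s j) (phi_comp phi (take j s) x)).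
Proof.
elim: s x => [|b s IH] x /=; first by split.
split=> [[Ab /IH sx] [|j] i //|sx]; first by rewrite ltnS; exact: sx.
by split; [exact: (sx 0%N b)|apply/IH => j i; exact: (sx j.+1 i)].
Qed.

Lemma cellE n (al : n.-tuple 'I_N) : cell A phi al = seq_cell al.
Proof.
apply/seteqP; split=> x /=.
- move=> alx; apply/seq_cell_nthP => j i; rewrite size_tuple => jn.
  by have := alx (Ordinal jn); rewrite (tnth_nth i).
- move/seq_cell_nthP => alx j; rewrite (tnth_nth (tnth al j)).
  by apply: alx; rewrite size_tuple.
Qed.

Lemma seq_cell_cat s t x :
  seq_cell (s ++ t) x <-> seq_cell s x /\ seq_cell t (phi_comp phi s x).
Proof. by elim: s x => [|b s IH] x /=; [split=> [|[]] | rewrite IH; tauto]. Qed.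

Lemma seq_cell_itinerary (f : X -> X) :
  (forall i y, A i y -> f y = phi i y) -> forall s x,
  (forall j i, (j < size s)%N -> A (nth i s j) (iter j f x)) -> seq_cell s x.
Proof.
move=> fphi; elim=> [|b s IH] x sx //=.
have Ab : A b x by exact: (sx 0%N b).
split=> //; apply: IH => j i js.
by rewrite -(fphi _ _ Ab) -iterSr; exact: (sx j.+1 i).
Qed.

Lemma phi_comp_lipschitz (lam : R) : 0 <= lam ->
  (forall i x y, mdist (phi i x) (phi i y) <= lam * mdist x y) ->
  forall s x y,
    mdist (phi_comp phi s x) (phi_comp phi s y) <= lam ^+ size s * mdist x y.
Proof.
move=> lam0 phi_lip; elim=> [|i s IH] x y /=; first by rewrite expr0 mul1r.
by rewrite (le_trans (IH _ _)) // exprSr -mulrA ler_wpM2l // exprn_ge0.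
Qed.

End Cells.

Section CompactMetric.
Variables (R : realType) (X : metricType R).
Hypothesis cptX : compact [set: X].

Lemma compact_mdist_bounded : exists D : R, forall x y : X, mdist x y <= D.
Proof.
have [[x0 _]|nX] := pselect (exists x : X, True); last first.
  by exists 0 => x; exfalso; apply: nX; exists x.
have near_bound : \forall D \near +oo, [set: X] `<=` [set y | mdist x0 y <= D].
  move: cptX => /compact_near_coveringP; apply => x _.
  exists (ball x 1, [set D | mdist x0 x + 1 < D]).
    by split=> //=; [exact: nbhsx_ballx | exact: nbhs_pinfty_gt (num_real _)].
  move=> [y D] [/= xy /= DD]; move: xy; rewrite ballEmdist => xy.
  rewrite (le_trans (metric_triangle _ x _)) // ltW // (lt_trans _ DD) //.
  by rewrite ltrD2l.
have [B HB] : exists B : R, [set: X] `<=` [set y | mdist x0 y <= B].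
  by near +oo_R => B; exists B; near: B.
exists (B + B) => x y; rewrite (le_trans (metric_triangle _ x0 _)) //.
by rewrite metric_sym lerD //; exact: HB.
Unshelve. all: by end_near. Qed.

Lemma finite_family_closure_radius (T : finType) (F : T -> set X) :
  exists2 e : R, 0 < e & forall y : X, exists x : X,
    forall b, F b `&` ball y e !=set0 -> closure (F b) x.
Proof.
have local x : exists2 r : R, 0 < r &
    forall b z, ball x r z -> F b z -> closure (F b) x.
  have : \forall z \near x, forall b, F b z -> closure (F b) x.
    apply: filter_forall => b.
    have [Fbx|nFbx] := pselect (closure (F b) x); first exact: nearW.
    have : nbhs x (~` closure (F b)).
      by apply: open_nbhs_nbhs; split=> //; exact/closed_openC/closed_closure.
    by apply: filterS => z nFbz Fbz; exfalso; apply/nFbz/subset_closure.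
  by move=> /nbhs_ballP[r /= r0 rH]; exists r => // b z xz; exact: rH.
have near_radius : \forall e \near (0 : R)^'+, [set: X] `<=`
    [set y | exists x, forall b, F b `&` ball y e !=set0 -> closure (F b) x].
  move: cptX => /compact_near_coveringP; apply => x _; have [r r0 rH] := local x.
  exists (ball x (r / 2), [set e | 0 < e < r / 2]).
    split=> //=; first by apply: nbhsx_ballx; rewrite divr_gt0.
    near=> e; apply/andP; split; near: e; first exact: nbhs_right_gt.
    by apply: nbhs_right_lt; rewrite divr_gt0.
  move=> [y e] [/= xy /andP[e0 er]]; exists x => b [z [Fbz yz]].
  apply: (rH b z) => //; move: xy yz; rewrite !ballEmdist /= => xy yz.
  rewrite (le_lt_trans (metric_triangle _ y _)) // [r]splitr ltrD //.
  exact: lt_trans yz er.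
near (0 : R)^'+ => e; exists e; near: e; first exact: nbhs_right_gt.
by move: near_radius; apply: filterS => e cover y; exact: cover.
Unshelve. all: by end_near. Qed.

End CompactMetric.

Section Multiplicity.
Variables (R : realType) (X : metricType R) (N : nat).
Variables (A : 'I_N -> set X) (phi : 'I_N -> X -> X).

Lemma card_cells_at_le_mult n (x : X) :
  #|[set al : n.-tuple 'I_N |
      `[< cell A phi al !=set0 /\ closure (cell A phi al) x >]]|%:R
    <= mult_cells A phi n.
Proof.
apply: sup_upper_bound; last by exists x.
split; first by eexists; exists x.
by exists #|{: n.-tuple 'I_N}|%:R => _ [y _ <-]; rewrite ler_nat max_card.
Qed.

(* phi_comp phi g maps the cell of g ++ b into the cell of b; once
   lam ^ m * diam X is below the radius of finite_family_closure_radius, all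
   these images meet a single ball, hence the cells b share a closure point. *)
Lemma card_extensions_le_mult n (lam : R) : compact [set: X] -> 0 < lam < 1 ->
  (forall i x y, mdist (phi i x) (phi i y) <= lam * mdist x y) ->
  exists m, forall g : seq 'I_N, size g = m ->
    #|[set b : n.-tuple 'I_N | `[< exists x, seq_cell A phi (g ++ b) x >]]|%:R
      <= maxr 1 (mult_cells A phi n).
Proof.
move=> cptX /andP[lam0 lam1] phi_lip.
have [e e0 closure_pt] :=
  finite_family_closure_radius cptX (fun b : n.-tuple 'I_N => cell A phi b).
have [D diamD] := compact_mdist_bounded cptX.
have D1 : 0 < `|D| + 1 by rewrite ltr_wpDl.
have [m _ lam_m] : \forall m \near \oo, `|lam ^+ m| < e / (`|D| + 1).
  apply: cvgr0_norm_lt; last by rewrite divr_gt0.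
  by apply: cvg_expr; rewrite ger0_norm ?ltW.
exists m => g sg.
have [[_ [x0 /seq_cell_cat[_ _]]]|none] :=
  pselect (exists (b : n.-tuple 'I_N) x, seq_cell A phi (g ++ b) x); last first.
  rewrite eq_card0 ?le_max ?ler01 // => b.
  by apply/negbTE/negP => /asboolP/asboolP[x gbx]; apply: none; exists b, x.
have [x cells_at_x] := closure_pt (phi_comp phi g x0).
rewrite le_max; apply/orP; right; apply: le_trans (card_cells_at_le_mult n x).
rewrite ler_nat; apply: leq_card_asbool => b [z /seq_cell_cat[_ bz]].
have near_gx0 : ball (phi_comp phi g x0) e (phi_comp phi g z).
  rewrite ballEmdist /=.
  rewrite (le_lt_trans (phi_comp_lipschitz (ltW lam0) phi_lip _ _ _)) //.
  have := lam_m m (leqnn m); rewrite /= sg ger0_norm ?exprn_ge0 ?ltW //.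
  rewrite ltr_pdivlMr // => lam_mD; apply: le_lt_trans lam_mD.
  rewrite ler_pM2l ?exprn_gt0 // (le_trans (diamD _ _)) //.
  by rewrite (le_trans (ler_norm D)) // lerDl.
have bgz : cell A phi b (phi_comp phi g z) by rewrite cellE.
split; first by exists (phi_comp phi g z).
by apply: cells_at_x; exists (phi_comp phi g z).
Qed.

End Multiplicity.

Section WindowCounting.
Variables (R : realType) (T : finType) (W : seq T -> Prop).

Definition all_windows (L : nat) (s : seq T) : Prop :=
  forall i, (i + L <= size s)%N -> W (take L (drop i s)).

Lemma all_windows_catl L s t : all_windows L (s ++ t) -> all_windows L s.
Proof.
move=> st i iL; have iL' : (L + i <= size s)%N by rewrite addnC.
have := st i; rewrite !take_drop takel_cat //.
by apply; rewrite size_cat (leq_trans iL) ?leq_addr.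
Qed.

Lemma card_tuple_cat_le q n (P : seq T -> Prop) :
  (#|[set a : (q + n).-tuple T | `[< P a >]]| <=
   \sum_(g : q.-tuple T) #|[set b : n.-tuple T | `[< P (g ++ b) >]]|)%N.
Proof.
have size_take (a : (q + n).-tuple T) : size (take q a) == q.
  by rewrite size_takel // size_tuple leq_addr.
have size_drop (a : (q + n).-tuple T) : size (drop q a) == n.
  by rewrite size_drop size_tuple addKn.
pose split_tuple a := (Tuple (size_take a), Tuple (size_drop a)).
have split_inj : injective split_tuple.
  move=> a b ab; have /= ab1 := congr1 (fun x => val x.1) ab.
  have /= ab2 := congr1 (fun x => val x.2) ab.
  apply: val_inj.
  by rewrite /= -(cat_take_drop q a) -(cat_take_drop q b) ab1 ab2.
pose Q (gb : q.-tuple T * n.-tuple T) := `[< P (gb.1 ++ gb.2) >].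
apply: (@leq_trans #|Q|).
  rewrite -(card_imset _ split_inj); apply/subset_leq_card/fintype.subsetP.
  move=> _ /imsetP[a Pa ->].
  by rewrite unfold_in /= cat_take_drop -in_set_asboolE.
apply: eq_leq; rewrite -sum1_card.
transitivity
  (\sum_(g : q.-tuple T) \sum_(b : n.-tuple T | `[< P (g ++ b) >]) 1)%N.
  by rewrite pair_big_dep; apply: eq_bigl => -[g b].
apply: eq_bigr => g _; rewrite -sum1_card.
by apply: eq_bigl => b; rewrite in_set_asboolE.
Qed.

Variables (m n : nat) (K : R).
Hypothesis extensions_le : forall g : seq T, size g = m ->
  #|[set b : n.-tuple T | `[< W (g ++ b) >]]|%:R <= K.

Lemma card_all_windows_step q : (m <= q)%N ->
  #|[set a : (q + n).-tuple T | `[< all_windows (m + n) a >]]|%:R <=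
  #|[set g : q.-tuple T | `[< all_windows (m + n) g >]]|%:R * K.
Proof.
move=> mq; apply: (@le_trans _ _ (\sum_(g : q.-tuple T)
    #|[set b : n.-tuple T | `[< all_windows (m + n) (g ++ b) >]]|)%:R).
  by rewrite ler_nat card_tuple_cat_le.
rewrite natr_sum -sum1_card natr_sum mulr_suml [X in _ <= X]big_mkcond /=.
apply: ler_sum => g _; rewrite mul1r in_set_asboolE.
have [gW|gNW] := pselect (all_windows (m + n) g); last first.
  rewrite asboolF // eq_card0 // => b; apply/negbTE/negP.
  by rewrite in_set_asboolE => /asboolP/all_windows_catl.
(* The last window of g ++ b is the suffix of length m of g followed by b. *)
have size_suffix : size (drop (q - m) g) = m.
  by rewrite size_drop size_tuple subKn.
rewrite asboolT //; apply: le_trans (extensions_le size_suffix).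
rewrite ler_nat; apply: leq_card_asbool => b gbW.
have := gbW (q - m)%N.
rewrite size_cat !size_tuple addnA subnK // => /(_ (leqnn _)).
rewrite drop_cat_leq ?size_tuple ?leq_subr // take_oversize //.
by rewrite size_cat size_drop !size_tuple subKn.
Qed.

Hypothesis K_ge1 : 1 <= K.
Hypothesis n_gt0 : (0 < n)%N.

Lemma card_all_windows_le p :
  #|[set a : p.-tuple T | `[< all_windows (m + n) a >]]|%:R <=
  (maxn #|T| 1 ^ (m + n + n))%:R * K ^+ (p %/ n).
Proof.
elim/ltn_ind: p => p IH; have [p_small|p_large] := ltnP p (m + n + n).
  apply: le_trans (ler_peMr _ (exprn_ege1 _ K_ge1)); last by rewrite ler0n.
  rewrite ler_nat (leq_trans (max_card _)) // card_tuple.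
  case: p {IH} p_small => [|p] p_small; first by rewrite expn_gt0 leq_maxr.
  rewrite (leq_trans (_ : _ <= maxn #|T| 1 ^ p.+1)%N) ?leq_exp2r ?leq_maxl //.
  by rewrite leq_pexp2l ?leq_maxr // ltnW.
have n_le_p : (n <= p)%N by rewrite (leq_trans _ p_large) // leq_addl.
have m_le : (m <= p - n)%N by lia.
rewrite -(subnK n_le_p); apply: le_trans (card_all_windows_step m_le) _.
rewrite divnDr ?dvdnn // divnn n_gt0 exprD expr1 mulrA.
rewrite ler_wpM2r ?(le_trans ler01) //.
by apply: IH; rewrite ltn_subrL n_gt0 (leq_trans n_gt0 n_le_p).
Qed.

End WindowCounting.

Section LimnEsup.
Variable R : realType.
Local Open Scope ereal_scope.
Implicit Types (u : (\bar R)^nat) (l : \bar R).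

Lemma limn_esup_lt_near u l : limn_esup u < l -> \forall n \near \oo, u n < l.
Proof.
have -> : limn_esup u = ereal_inf (range (esups u)).
  by rewrite limn_esup_lim; apply: cvg_lim => //; exact: cvg_esups_inf.
move=> /ereal_inf_lt[_ [n1 _ <-]] un1; exists n1 => // n n1n.
by apply: le_lt_trans un1; apply: ereal_sup_ubound; exists n => /=.
Qed.

Lemma limn_esup_le_near u l : (\forall n \near \oo, u n <= l) -> limn_esup u <= l.
Proof.
move=> [n1 _ un]; rewrite limn_esup_lim; apply: lime_le; first exact: is_cvg_esups.
exists n1 => // n n1n; apply: ge_ereal_sup => _ [k /= nk <-].
by apply: un; exact: leq_trans nk.
Qed.

Lemma limn_esup_ge0 u : (forall n, 0 <= u n) -> 0 <= limn_esup u.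
Proof.
move=> u0; rewrite limn_esup_lim; apply: lime_ge; first exact: is_cvg_esups.
apply: nearW => n; apply: le_trans (u0 n) _.
by apply: ereal_sup_ubound; exists n => /=.
Qed.

End LimnEsup.

Lemma nonneg_cvge0 (R : realType) (T : Type) (F : set_system T) {FF : Filter F}
    (g : T -> \bar R) : (forall t, (0 <= g t)%E) ->
  (forall eta : R, 0 < eta -> \forall t \near F, (g t <= eta%:E)%E) ->
  g @ F --> 0%E.
Proof.
move=> g0 g_small; apply/fine_cvgP; split.
  apply: filterS (g_small 1 ltr01) => t gt1.
  by rewrite ge0_fin_numE // (le_lt_trans gt1) ?ltry.
apply/cvgrPdist_le => eta eta0; apply: filterS (g_small eta eta0) => t.
move: (g0 t) => /=; case: (g t) => [r| |] //=; rewrite !lee_fin => r0 r_eta.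
by rewrite sub0r normrN ger0_norm.
Qed.

Lemma ln_le_mul_expr (R : realType) (x C K : R) j : 0 <= x -> x <= C * K ^+ j ->
  1 <= C -> 1 <= K -> ln x <= ln C + j%:R * ln K.
Proof.
move=> x0 x_le C1 K1.
have C0 : 0 < C := lt_le_trans ltr01 C1.
have K0 : 0 < K := lt_le_trans ltr01 K1.
have [x_le0|x_gt0] := leP x 0.
  by rewrite ln0 // addr_ge0 ?mulr_ge0 ?ln_ge0.
rewrite (le_trans (_ : _ <= ln (C * K ^+ j))) //.
  by rewrite ler_ln ?posrE ?mulr_gt0 ?exprn_gt0.
by rewrite lnM ?posrE ?exprn_gt0 // lnXn // mulr_natl.
Qed.

Lemma limn_esup_log_rate_le (R : realType) (c : nat -> nat) (C K : R) n :
  1 <= C -> 1 <= K -> (0 < n)%N -> (forall p, (c p)%:R <= C * K ^+ (p %/ n)) ->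
  (limn_esup (fun p => (p%:R^-1 * ln (c p)%:R)%:E) <= (ln K / n%:R)%:E)%E.
Proof.
move=> C1 K1 n_gt0 c_le; apply/lee_addgt0Pr => eta eta0.
apply: limn_esup_le_near; near=> p.
have p_gt0 : 0 < p%:R :> R.
  by near: p; apply: filterS (nbhs_infty_gt 0) => p; rewrite ltr0n.
rewrite -EFinD lee_fin.
have ln_c := ln_le_mul_expr (ler0n _ _) (c_le p) C1 K1.
rewrite (le_trans (ler_wpM2l _ ln_c)) ?invr_ge0 ?ler0n // mulrDr addrC lerD //.
  rewrite mulrA [ln K / _]mulrC ler_wpM2r ?ln_ge0 // ler_pdivrMl //.
  by rewrite ler_pdivlMr ?ltr0n // -natrM ler_nat leq_trunc_div.
rewrite ler_pdivrMl // -ler_pdivrMr //.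
by near: p; exact: nbhs_infty_ger.
Unshelve. all: by end_near. Qed.

Section Itineraries.
Variables (R : realType) (X : metricType R) (N : nat).
Variables (A : 'I_N -> set X) (f : X -> X).

Lemma itineraries_window p L (al : p.-tuple 'I_N) i (w : L.-tuple 'I_N) :
  al \in itineraries A f p -> (i + L <= p)%N -> val w = take L (drop i al) ->
  w \in itineraries A f L.
Proof.
rewrite inE => /asboolP[x [x_reg x_itin]] iL w_al; rewrite inE; apply/asboolP.
exists (iter i f x); split=> [j jL|j]; rewrite -iterD.
  by apply: x_reg; lia.
have ji : (j + i < p)%N by move: (ltn_ord j); lia.
pose a := tnth al (Ordinal ji); have := x_itin (Ordinal ji).
rewrite (tnth_nth a) /= [tnth w j](tnth_nth a) w_al nth_take //.
by rewrite nth_drop [(i + j)%N]addnC.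
Qed.

Lemma itineraries_seq_cell (phi : 'I_N -> X -> X) L (w : L.-tuple 'I_N) :
  (forall i x, A i x -> f x = phi i x) ->
  w \in itineraries A f L -> exists x, seq_cell A phi w x.
Proof.
move=> fphi; rewrite inE => /asboolP[x [_ x_itin]]; exists x.
apply: (seq_cell_itinerary fphi) => j i; rewrite size_tuple => jL.
by have := x_itin (Ordinal jL); rewrite (tnth_nth i).
Qed.

End Itineraries.

Lemma J_set_all_windows (R : realType) (X : metricType R) (M N : nat)
    (U : set 'rV[R]_M) (A : 'rV[R]_M -> 'I_N -> set X)
    (phi : 'rV[R]_M -> 'I_N -> X -> X) (f : 'rV[R]_M -> X -> X)
    (mu0 : 'rV[R]_M) (L p : nat) (delta : R) :
  (forall i x, A mu0 i x -> f mu0 x = phi mu0 i x) ->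
  (forall mu, U_delta U mu0 delta mu ->
     itineraries (A mu) (f mu) L = itineraries (A mu0) (f mu0) L) ->
  forall al : p.-tuple 'I_N, al \in J_set U A f p delta mu0 ->
  all_windows (fun s => exists x, seq_cell (A mu0) (phi mu0) s x) L al.
Proof.
move=> fphi stable al; rewrite inE => /asboolP[mu mu_near al_itin] i iL.
rewrite size_tuple in iL.
have size_w : size (take L (drop i al)) == L.
  by rewrite size_takel // size_drop size_tuple; lia.
apply: (itineraries_seq_cell (w := Tuple size_w) fphi).
by rewrite -(stable mu) //; exact: itineraries_window al_itin iL _.
Qed.

Lemma H_mult0_small_mult (R : realType) (X : metricType R) (N : nat)
    (A : 'I_N -> set X) (phi : 'I_N -> X -> X) (eta : R) :
  H_mult A phi = 0%E -> 0 < eta ->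
  exists2 n, (0 < n)%N & ln (maxr 1 (mult_cells A phi n)) / n%:R <= eta.
Proof.
move=> H0 eta0; have : (H_mult A phi < eta%:E)%E by rewrite H0 lte_fin.
move=> /limn_esup_lt_near[n1 _ small].
exists (maxn n1 1); first by rewrite leq_maxr.
have := small (maxn n1 1) (leq_maxl _ _); rewrite /= lte_fin mulrC => lt_eta.
by rewrite /maxr; case: ifPn => _; [|rewrite ln1 mul0r]; exact: ltW.
Qed.

Lemma limn_esup_J_set_le (R : realType) (X : metricType R) (M N : nat)
    (U : set 'rV[R]_M) (A : 'rV[R]_M -> 'I_N -> set X)
    (phi : 'rV[R]_M -> 'I_N -> X -> X) (f : 'rV[R]_M -> X -> X)
    (mu0 : 'rV[R]_M) (m n : nat) (K delta0 : R) :
  (forall i x, A mu0 i x -> f mu0 x = phi mu0 i x) -> 1 <= K -> (0 < n)%N ->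
  (forall g : seq 'I_N, size g = m ->
    #|[set b : n.-tuple 'I_N |
        `[< exists x, seq_cell (A mu0) (phi mu0) (g ++ b) x >]]|%:R <= K) ->
  (forall mu, U_delta U mu0 delta0 mu ->
     itineraries (A mu) (f mu) (m + n) = itineraries (A mu0) (f mu0) (m + n)) ->
  forall delta, delta <= delta0 ->
  (limn_esup (fun p => (p%:R^-1 * ln #|J_set U A f p delta mu0|%:R)%:E)
    <= (ln K / n%:R)%:E)%E.
Proof.
move=> fphi K1 n_gt0 ext_le stable delta le_delta.
have stable_delta mu : U_delta U mu0 delta mu ->
    itineraries (A mu) (f mu) (m + n) = itineraries (A mu0) (f mu0) (m + n).
  by move=> [Umu mu_ball]; apply: stable; split=> //; exact: le_ball mu_ball.
pose C : R := (maxn #|'I_N| 1 ^ (m + n + n))%:R.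
apply: (limn_esup_log_rate_le (C := C)) => // [|p].
  by rewrite /C ler1n expn_gt0 leq_maxr.
pose W s := exists x, seq_cell (A mu0) (phi mu0) s x.
apply: le_trans (card_all_windows_le (W := W) ext_le K1 n_gt0 p); rewrite ler_nat.
apply/subset_leq_card/fintype.subsetP => al /(J_set_all_windows fphi stable_delta).
by move=> alW; rewrite !inE; apply/asboolP.
Qed.

Lemma ln_natr_ge0 (R : realType) (k : nat) : 0 <= ln (k%:R : R).
Proof. by case: k => [|k]; [rewrite ln0 | rewrite ln_ge0 // ler1n]. Qed.

Unset Implicit Arguments. Set Strict Implicit.

Theorem proposition3p11 (R : realType) (X : metricType R)
  (lam : R) (M N : nat) (U : set 'rV[R]_M)
  (A : 'rV[R]_M -> 'I_N -> set X) (phi : 'rV[R]_M -> 'I_N -> X -> X)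
  (f : 'rV[R]_M -> X -> X) (mu0 : 'rV[R]_M) :
  compact [set: X] ->
  (forall (x : X) (r : R), connected (ball x r)) ->
  0 < lam < 1 ->
  positive_lebesgue_measure U ->
  (forall mu, U mu -> piecewise_contraction lam (A mu) (phi mu) (f mu)) ->
  U mu0 ->
  (forall n, (1 <= n)%N -> cells_stable_at U A phi f n mu0) ->
  H_mult (A mu0) (phi mu0) = 0%E ->
  hypothesis_E U A f mu0.
Proof.
move=> cptX _ lam01 _ family_pc Umu0 stable Hmult0.
have [_ _ _ phi_bilip fphi] := family_pc mu0 Umu0.
have phi_lip i x y : mdist (phi mu0 i x) (phi mu0 i y) <= lam * mdist x y.
  by have [c [_ /(_ x y)[]]] := phi_bilip i.
apply: nonneg_cvge0 => [delta|eta eta0].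
  by apply: limn_esup_ge0 => p; rewrite lee_fin mulr_ge0 ?invr_ge0 ?ln_natr_ge0.
have [n n_gt0 lnK_le] := H_mult0_small_mult Hmult0 eta0.
have [m ext_le] := card_extensions_le_mult (A mu0) n cptX lam01 phi_lip.
have [delta0 [delta0_gt0 [stable_mn _]]] : cells_stable_at U A phi f (m + n) mu0.
  by apply: stable; rewrite addn_gt0 n_gt0 orbT.
near=> delta.
apply: le_trans (limn_esup_J_set_le fphi _ n_gt0 ext_le stable_mn _) _.
- by rewrite le_max lexx.
- by near: delta; exact: nbhs_right_le.
- by rewrite lee_fin.
Unshelve. all: by end_near. Qed.
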